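(* Fix $\alpha\in(0,1)$. Let $(P_i)_{i\ge0}$ be the $\alpha$-random walk and $X_i=1$ if $P_i$ is visible, $X_i=0$ otherwise. Then $$\mathbf V(X_1+\cdots+X_n)\ll n^{3/2}\log n,$$ with implied constant depending only on $\alpha$.
   Context: The $\alpha$-random walk: $P_0=(0,0)$ and $P_{i+1}=P_i+(1,0)$ with probability $\alpha$, $P_{i+1}=P_i+(0,1)$ with probability $1-\alpha$, independently. A lattice point $(a,b)$ is visible if $\gcd(a,b)=1$. $\mathbf V$ denotes variance. *)

From HB Require Import structures.
From mathcomp Require Import all_boot all_order all_algebra.
From mathcomp Require Import all_classical all_reals.
From mathcomp Require Import exp.
Set Implicit Arguments. Unset Strict Implicit. Unset Printing Implicit Defensive.
Import Order.TTheory GRing.Theory Num.Theory.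
Local Open Scope ring_scope.

(* The first n steps of the alpha-random walk: w j = true means step j is
   (1,0) (probability alpha), false means (0,1) (probability 1-alpha). *)
Definition step_seq (n : nat) := {ffun 'I_n -> bool}.

Section Walk.
Variable R : realType.

Definition walk_prob (alpha : R) (n : nat) (w : step_seq n) : R :=
  \prod_(j < n) (if w j then alpha else 1 - alpha).

Definition posx (n : nat) (w : step_seq n) (i : nat) : nat :=
  #|[set j : 'I_n | (j < i)%N && w j]|.
Definition posy (n : nat) (w : step_seq n) (i : nat) : nat :=
  #|[set j : 'I_n | (j < i)%N && ~~ w j]|.

Definition visible (a b : nat) : bool := gcdn a b == 1%N.

Definition Xvis (n : nat) (w : step_seq n) (i : nat) : R :=
  (visible (posx w i) (posy w i))%:R.
Definition Ssum (n : nat) (w : step_seq n) : R :=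
  \sum_(1 <= i < n.+1) Xvis w i.

Definition expect (alpha : R) (n : nat) (f : step_seq n -> R) : R :=
  \sum_(w : step_seq n) walk_prob alpha w * f w.

Definition variance (alpha : R) (n : nat) (f : step_seq n -> R) : R :=
  expect alpha (fun w => f w ^+ 2) - (expect alpha f) ^+ 2.

End Walk.

From HB Require Import structures.
From mathcomp Require Import all_boot all_order all_algebra.
From mathcomp Require Import all_classical all_reals.
From mathcomp Require Import exp.
From mathcomp Require Import ring lra zify.
Import Order.TTheory GRing.Theory Num.Theory.
Local Open Scope ring_scope.
Set Implicit Arguments. Unset Strict Implicit. Unset Printing Implicit Defensive.

(* P_i = (x, i - x) is visible iff x is coprime to i, where x is binomially
   distributed.  Given P_i = (k, i - k), the first coordinate of P_j (i < j) is
   k + l with l an independent binomial variable of parameter j - i, so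
   P(X_j = 1 | P_i) = E[coprime(k + l, j)].  Writing coprimality with j by
   inclusion-exclusion over the primes of j, and comparing each count of
   multiples of d with its density 1/d by Abel summation, this conditional
   probability differs from the constant prod_(p | j) (1 - 1/p) by at most
   2^omega(j) times the total variation of the binomial law.  That total
   variation is O((j - i)^(-1/2)), because the successive differences of
   binomial weights are centred binomial weights, whose first absolute moment
   is O(sqrt (j - i)).  Hence cov(X_i, X_j) = O(2^omega(j) / sqrt (j - i)), and
   V(S_n) = O(n + sqrt n sum_(x <= n) 2^omega(x)) = O(n^(3/2) log n),
   as 2^omega(x) <= tau(x) and sum_(x <= n) tau(x) <= n (1 + log n). *)

Section BinomialWeights.
Variables (R : realType) (a : R).

Definition bin_weight (m k : nat) : R := 'C(m, k)%:R * a ^+ k * (1 - a) ^+ (m - k).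

Lemma bin_weight_small m k : (m < k)%N -> bin_weight m k = 0.
Proof. by move=> mk; rewrite /bin_weight bin_small // !mul0r. Qed.

Lemma bin_weight00 : bin_weight 0 0 = 1.
Proof. by rewrite /bin_weight bin0 !expr0 !mulr1. Qed.

Lemma bin_weightS0 m : bin_weight m.+1 0 = (1 - a) * bin_weight m 0.
Proof. by rewrite /bin_weight !bin0 !subn0 exprS; ring. Qed.

Lemma bin_weightSS m k :
  bin_weight m.+1 k.+1 = a * bin_weight m k + (1 - a) * bin_weight m k.+1.
Proof.
rewrite /bin_weight binS subSS; case: (ltnP k m) => km.
  have -> : (m - k = (m - k.+1).+1)%N by lia.
  by rewrite natrD !exprS; ring.
by rewrite (@bin_small m k.+1) ?ltnS // add0n exprS !mul0r; ring.
Qed.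

Lemma sum_bin_weightS m (G : nat -> R) :
  \sum_(0 <= k < m.+2) bin_weight m.+1 k * G k =
  \sum_(0 <= k < m.+1) bin_weight m k * (a * G k.+1 + (1 - a) * G k).
Proof.
rewrite big_nat_recl // bin_weightS0.
under eq_bigr => k _ do rewrite bin_weightSS mulrDl.
rewrite big_split /=.
under [in RHS]eq_bigr => k _ do rewrite mulrDr.
rewrite big_split /= [X in _ = _ + X]big_nat_recl // [X in _ + (_ + X) = _]big_nat_recr //=.
rewrite (@bin_weight_small m m.+1) // mulr0 mul0r addr0.
have -> : \sum_(0 <= k < m.+1) a * bin_weight m k * G k.+1 =
          \sum_(0 <= k < m.+1) bin_weight m k * (a * G k.+1).
  by apply: eq_bigr => k _; ring.
have -> : \sum_(0 <= k < m) (1 - a) * bin_weight m k.+1 * G k.+1 =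
          \sum_(0 <= k < m) bin_weight m k.+1 * ((1 - a) * G k.+1).
  by apply: eq_bigr => k _; ring.
ring.
Qed.

Lemma sum_bin_weight m : \sum_(0 <= k < m.+1) bin_weight m k = 1.
Proof.
elim: m => [|m IH]; first by rewrite big_nat1 bin_weight00.
have := sum_bin_weightS m (fun _ => 1).
under eq_bigr => k _ do rewrite mulr1.
move=> ->; under eq_bigr => k _ do rewrite !mulr1 addrC subrK mulr1.
exact: IH.
Qed.

Lemma sum_bin_weight_dev_sqr m :
  \sum_(0 <= k < m.+1) bin_weight m k * (k%:R - m%:R * a) ^+ 2 = m%:R * a * (1 - a).
Proof.
elim: m => [|m IH]; first by rewrite big_nat1 mul0r subr0 expr2 !mul0r mulr0.
rewrite sum_bin_weightS.
have step k : a * (k.+1%:R - m.+1%:R * a) ^+ 2 + (1 - a) * (k%:R - m.+1%:R * a) ^+ 2 =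
              (k%:R - m%:R * a) ^+ 2 + a * (1 - a).
  by rewrite -[k.+1]addn1 -[m.+1]addn1 !natrD; ring.
under eq_bigr => k _ do rewrite step mulrDr.
rewrite big_split /= IH -mulr_suml sum_bin_weight -[m.+1]addn1 natrD; ring.
Qed.

Lemma mul_bin_weight_diag m k :
  m.+1%:R * a * bin_weight m k = k.+1%:R * bin_weight m.+1 k.+1.
Proof.
rewrite /bin_weight subSS exprS.
have := congr1 (GRing.natmul (1 : R)) (mul_bin_diag m.+1 k); rewrite /= !natrM => E.
transitivity ((m.+1%:R * 'C(m, k)%:R) * a ^+ k * a * (1 - a) ^+ (m - k)); first ring.
by rewrite E; ring.
Qed.

Lemma mul_bin_weight_left m k : (k <= m)%N ->
  k.+1%:R * (1 - a) * bin_weight m k.+1 = (m%:R - k%:R) * a * bin_weight m k.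
Proof.
rewrite leq_eqVlt => /predU1P[->|km]; first by rewrite bin_weight_small // subrr !mulr0 !mul0r.
have := congr1 (GRing.natmul (1 : R)) (mul_bin_left m k); rewrite /= !natrM (natrB _ (ltnW km)) => E.
have mk : (m - k = (m - k.+1).+1)%N by lia.
rewrite /bin_weight mk !exprS.
transitivity ((k.+1%:R * 'C(m, k.+1)%:R) * a ^+ k * a * (1 - a) * (1 - a) ^+ (m - k.+1)).
  by ring.
by rewrite E; ring.
Qed.

Lemma bin_weight_sub m k : (k <= m)%N ->
  m.+1%:R * a * (1 - a) * (bin_weight m k - bin_weight m k.+1) =
  bin_weight m.+1 k.+1 * (k.+1%:R - m.+1%:R * a).
Proof.
move=> km; have up := mul_bin_weight_diag m k; have down := mul_bin_weight_left km.
have k1 : (k.+1%:R : R) != 0 by rewrite pnatr_eq0.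
apply: (mulfI k1); apply/eqP; rewrite -subr_eq0 -mulrBr.
set x := bin_weight m k in up down *; set y := bin_weight m k.+1 in down *.
set z := bin_weight m.+1 k.+1 in up *.
have -> : k.+1%:R * (m.+1%:R * a * (1 - a) * (x - y) - z * (k.+1%:R - m.+1%:R * a)) =
  (k.+1%:R - m.+1%:R * a) * (m.+1%:R * a * x - k.+1%:R * z)
  - m.+1%:R * a * (k.+1%:R * (1 - a) * y - (m%:R - k%:R) * a * x).
  by rewrite -[k.+1]addn1 -[m.+1]addn1 !natrD; ring.
by rewrite up down !subrr !mulr0 subrr.
Qed.

Lemma bin_weight_ge0 m k : 0 <= a <= 1 -> 0 <= bin_weight m k.
Proof.
by case/andP=> a0 a1; rewrite /bin_weight !mulr_ge0 ?exprn_ge0 ?ler0n ?subr_ge0.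
Qed.

End BinomialWeights.

Section BinomialTotalVariation.
Variables (R : realType) (a : R).
Hypothesis a01 : 0 < a < 1.

Let a_itv : 0 <= a <= 1.
Proof. by case/andP: a01 => a0 a1; rewrite !ltW. Qed.

Definition bin_tv (h : nat) : R :=
  \sum_(0 <= l < h.+1) `|bin_weight a h l - bin_weight a h l.+1|.

(* AM-GM in the form |x| <= (x^2 + s^2) / 2s. *)
Lemma sum_bin_weight_abs_dev_le m s : 0 < s ->
  \sum_(0 <= k < m.+1) bin_weight a m k * `|k%:R - m%:R * a| <=
  (m%:R * a * (1 - a) + s ^+ 2) / (2 * s).
Proof.
move=> s0.
apply: (@le_trans _ _ (\sum_(0 <= k < m.+1)
    bin_weight a m k * (((k%:R - m%:R * a) ^+ 2 + s ^+ 2) / (2 * s)))).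
  apply: ler_sum_nat => k _; apply: ler_wpM2l; first exact: bin_weight_ge0.
  rewrite ler_pdivlMr ?mulr_gt0 // -real_normK ?num_real //.
  by have := sqr_ge0 (`|k%:R - m%:R * a| - s); nra.
under eq_bigr => k _ do rewrite mulrA mulrDr.
by rewrite -mulr_suml big_split /= sum_bin_weight_dev_sqr -mulr_suml sum_bin_weight mul1r.
Qed.

Lemma bin_tv_ge0 h : 0 <= bin_tv h.
Proof. by apply: sumr_ge0 => l _; exact: normr_ge0. Qed.

Lemma bin_tv_sqrt_le h : a * (1 - a) * bin_tv h * Num.sqrt h.+1%:R <= 1.
Proof.
case/andP: a01 => a0 a1.
set m := h.+1; set s := Num.sqrt (m%:R : R).
have s0 : 0 < s by rewrite sqrtr_gt0 ltr0n.
have s2 : s ^+ 2 = m%:R by rewrite sqr_sqrtr // ler0n.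
have tv_moment : m%:R * a * (1 - a) * bin_tv h =
    \sum_(0 <= l < h.+1) bin_weight a m l.+1 * `|l.+1%:R - m%:R * a|.
  rewrite /bin_tv mulr_sumr; apply: eq_big_nat => l /andP[_ lh].
  have c0 : 0 <= m%:R * a * (1 - a) by rewrite !mulr_ge0 ?ler0n ?subr_ge0 ?ltW.
  rewrite -{1}(ger0_norm c0) -normrM bin_weight_sub // normrM ger0_norm //.
  exact: bin_weight_ge0.
have : m%:R * a * (1 - a) * bin_tv h <= (m%:R * a * (1 - a) + s ^+ 2) / (2 * s).
  rewrite tv_moment; apply: le_trans (sum_bin_weight_abs_dev_le h.+1 s0).
  rewrite [X in _ <= X]big_nat_recl // lerDr mulr_ge0 ?normr_ge0 //.
  exact: bin_weight_ge0.
rewrite -s2 ler_pdivlMr ?mulr_gt0 // => H.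
have ab : a * (1 - a) <= 1 by nra.
have tv0 := bin_tv_ge0 h.
have : s * (a * (1 - a) * bin_tv h * s) <= s * 1 by nra.
by rewrite ler_pM2l.
Qed.

Lemma bin_tv_le h : (0 < h)%N -> bin_tv h <= (a * (1 - a))^-1 / Num.sqrt h%:R.
Proof.
case/andP: a01 => a0 a1 h0.
have ab : 0 < a * (1 - a) by rewrite mulr_gt0 // subr_gt0.
have s0 : 0 < Num.sqrt (h%:R : R) by rewrite sqrtr_gt0 ltr0n.
have s_le : Num.sqrt (h%:R : R) <= Num.sqrt h.+1%:R by rewrite ler_sqrt ?ler0n // ler_nat.
rewrite -invfM -[X in _ <= X]mul1r ler_pdivlMr ?mulr_gt0 ?subr_gt0 //.
rewrite (_ : bin_tv h * _ = a * (1 - a) * bin_tv h * Num.sqrt h%:R); last by ring.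
apply: le_trans (bin_tv_sqrt_le h).
by rewrite ler_wpM2l // mulr_ge0 ?bin_tv_ge0 ?ltW.
Qed.

End BinomialTotalVariation.

Lemma sum_dvd_addn d r L : (0 < d)%N ->
  (\sum_(0 <= l < L) (d %| r + l) + (r + d.-1) %/ d = (r + L + d.-1) %/ d)%N.
Proof.
move=> d0; elim: L => [|L IH]; first by rewrite big_nil add0n addn0.
rewrite big_nat_recr //= -addnA [((d %| r + L) + _)%N]addnC addnA IH.
rewrite (_ : (r + L.+1 + d.-1 = (r + L + d.-1).+1)%N); last by lia.
rewrite divnS // addnC (_ : ((r + L + d.-1).+1 = r + L + d)%N); last by lia.
by rewrite (dvdn_addl _ (dvdnn d)).
Qed.

Lemma sum_dvd_addn_bounds d r L : (0 < d)%N ->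
  (d * \sum_(0 <= l < L) (d %| r + l) <= L + d)%N /\
  (L <= d * \sum_(0 <= l < L) (d %| r + l) + d)%N.
Proof.
move=> d0; have := sum_dvd_addn r L d0.
have := divn_eq (r + L + d.-1) d; have := divn_eq (r + d.-1) d.
have := ltn_pmod (r + L + d.-1) d0; have := ltn_pmod (r + d.-1) d0.
move: (\sum_(0 <= l < L) _)%N => c; split; nia.
Qed.

Lemma sum_dvd_sub_inv_le1 (R : realType) d r L : (0 < d)%N ->
  `|\sum_(0 <= l < L) (((d %| r + l)%N%:R : R) - d%:R^-1)| <= 1.
Proof.
move=> d0; have [up low] := sum_dvd_addn_bounds r L d0.
have dR : (0 : R) < d%:R by rewrite ltr0n.
rewrite big_split /= -natr_sum sumr_const_nat subn0.
move: (\sum_(0 <= l < L) _)%N up low => c up low.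
have -> : c%:R + - d%:R^-1 *+ L = (d%:R * c%:R - L%:R) / d%:R :> R.
  by rewrite mulNrn -mulr_natr; field; rewrite pnatr_eq0 -lt0n.
rewrite normrM [`|d%:R^-1|]ger0_norm ?invr_ge0 ?ler0n // ler_pdivrMr // mul1r ler_norml.
have upR : d%:R * c%:R <= L%:R + d%:R :> R by rewrite -natrM -natrD ler_nat.
have lowR : L%:R <= d%:R * c%:R + d%:R :> R by rewrite -natrM -natrD ler_nat.
by apply/andP; split; lra.
Qed.

Lemma abel_summation (R : comPzRingType) (b u : nat -> R) N :
  \sum_(0 <= l < N) b l * u l =
  \sum_(0 <= l < N) (b l - b l.+1) * \sum_(0 <= t < l.+1) u t
  + b N * \sum_(0 <= t < N) u t.
Proof.
elim: N => [|N IH]; first by rewrite !big_nil mulr0 addr0.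
by rewrite !big_nat_recr //= IH; ring.
Qed.

Section BinomialSieve.
Variables (R : realType) (a : R) (h : nat).

Lemma bin_weight_dvd_density_le d r : (0 < d)%N ->
  `|\sum_(0 <= l < h.+1) bin_weight a h l * (d %| r + l)%N%:R - d%:R^-1| <= bin_tv a h.
Proof.
move=> d0.
have -> : \sum_(0 <= l < h.+1) bin_weight a h l * (d %| r + l)%N%:R - d%:R^-1 =
          \sum_(0 <= l < h.+1) bin_weight a h l * ((d %| r + l)%N%:R - d%:R^-1).
  under [RHS]eq_bigr => l _ do rewrite mulrBr.
  by rewrite sumrB -mulr_suml sum_bin_weight mul1r.
rewrite abel_summation bin_weight_small // mul0r addr0.
apply: le_trans (ler_norm_sum _ _ _) _; apply: ler_sum_nat => l _.
rewrite normrM -[X in _ <= X]mulr1 ler_wpM2l ?normr_ge0 //.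
exact: sum_dvd_sub_inv_le1.
Qed.

(* Inclusion-exclusion over the primes of ps, one prime at a time. *)
Lemma bin_weight_sieve_le (ps : seq nat) : uniq ps -> all prime ps ->
  forall d, (0 < d)%N -> all (fun p => ~~ (p %| d)%N) ps -> forall r,
  `|\sum_(0 <= l < h.+1) bin_weight a h l *
       ((d %| r + l)%N%:R * \prod_(p <- ps) (1 - (p %| r + l)%N%:R))
    - d%:R^-1 * \prod_(p <- ps) (1 - p%:R^-1)| <= 2 ^+ size ps * bin_tv a h.
Proof.
elim: ps => [|p ps IH] /=.
  move=> _ _ d d0 _ r; under eq_bigr => l _ do rewrite big_nil mulr1.
  by rewrite big_nil mulr1 expr0 mul1r; exact: bin_weight_dvd_density_le.
case/andP=> p_ps uniq_ps /andP[pp prime_ps] d d0 /andP[pNd psNd] r.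
have cop : coprime d p by rewrite coprime_sym prime_coprime.
have dp0 : (0 < d * p)%N by rewrite muln_gt0 d0 prime_gt0.
have psNdp : all (fun q => ~~ (q %| d * p)%N) ps.
  apply/allP => q q_ps; have qp := allP prime_ps q q_ps.
  rewrite Euclid_dvdM // negb_or (allP psNd q q_ps) dvdn_prime2 //.
  by apply: contra p_ps => /eqP <-.
have IHd := IH uniq_ps prime_ps d d0 psNd r.
have IHdp := IH uniq_ps prime_ps _ dp0 psNdp r.
have -> : \sum_(0 <= l < h.+1) bin_weight a h l *
            ((d %| r + l)%N%:R * \prod_(q <- p :: ps) (1 - (q %| r + l)%N%:R)) =
          \sum_(0 <= l < h.+1) bin_weight a h l *
            ((d %| r + l)%N%:R * \prod_(q <- ps) (1 - (q %| r + l)%N%:R))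
          - \sum_(0 <= l < h.+1) bin_weight a h l *
            ((d * p %| r + l)%N%:R * \prod_(q <- ps) (1 - (q %| r + l)%N%:R)).
  rewrite -sumrB; apply: eq_bigr => l _; rewrite big_cons Gauss_dvd //.
  by case: (d %| r + l)%N; case: (p %| r + l)%N => /=; ring.
have -> : d%:R^-1 * \prod_(q <- p :: ps) (1 - q%:R^-1) =
          d%:R^-1 * \prod_(q <- ps) (1 - q%:R^-1)
          - (d * p)%:R^-1 * \prod_(q <- ps) (1 - q%:R^-1) :> R.
  by rewrite big_cons natrM invfM; ring.
set S1 := \sum_(_ <= _ < _) _ in IHd *; set S2 := \sum_(_ <= _ < _) _ in IHdp *.
set T1 := _ * \prod_(q <- ps) _ in IHd *; set T2 := _ * \prod_(q <- ps) _ in IHdp *.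
rewrite (_ : S1 - S2 - (T1 - T2) = (S1 - T1) - (S2 - T2)); last by ring.
apply: le_trans (ler_normB _ _) _.
by rewrite exprS; lra.
Qed.

End BinomialSieve.

Definition step_cons n (b : bool) (w : step_seq n) : step_seq n.+1 :=
  [ffun j : 'I_n.+1 => if unlift ord0 j is Some j' then w j' else b].

Definition step_behead n (w : step_seq n.+1) : step_seq n := [ffun j => w (lift ord0 j)].

Lemma step_cons0 n b (w : step_seq n) : step_cons b w ord0 = b.
Proof. by rewrite ffunE unlift_none. Qed.

Lemma step_consS n b (w : step_seq n) j : step_cons b w (lift ord0 j) = w j.
Proof. by rewrite ffunE liftK. Qed.

Lemma step_beheadK n (w : step_seq n.+1) : step_cons (w ord0) (step_behead w) = w.
Proof. by apply/ffunP => j; rewrite ffunE; case: unliftP => [j' ->|->] //; rewrite ffunE. Qed.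

Lemma step_consK n b (w : step_seq n) : step_behead (step_cons b w) = w.
Proof. by apply/ffunP => j; rewrite ffunE step_consS. Qed.

Lemma sum_step_seqS (R : nmodType) n (F : step_seq n.+1 -> R) :
  \sum_(w : step_seq n.+1) F w = \sum_(b : bool) \sum_(w : step_seq n) F (step_cons b w).
Proof.
rewrite pair_bigA (reindex (fun bw : bool * step_seq n => step_cons bw.1 bw.2)) //.
exists (fun w : step_seq n.+1 => (w ord0, step_behead w)) => [[b w] _|w _] /=.
  by rewrite step_cons0 step_consK.
by rewrite step_beheadK.
Qed.

Lemma posx0 n (w : step_seq n) : posx w 0 = 0%N.
Proof. by apply: eq_card0 => j; rewrite inE. Qed.

Lemma posx_cons n b (w : step_seq n) i : posx (step_cons b w) i.+1 = (b + posx w i)%N.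
Proof.
rewrite /posx -!sum1_card big_mkcond [in RHS]big_mkcond big_ord_recl inE step_cons0 /=.
rewrite (_ : (if b then 1 else 0)%N = b); last by case: b.
by congr (_ + _)%N; apply: eq_bigr => j _; rewrite !inE step_consS.
Qed.

Lemma card_ord_lt n i : (i <= n)%N -> #|[set j : 'I_n | (j < i)%N]| = i.
Proof.
move=> i_n; rewrite -sum1_card -[RHS]card_ord -sum1_card (big_ord_widen n (fun _ => 1%N)) //.
by apply: eq_bigl => j; rewrite inE.
Qed.

Lemma posx_add_posy n (w : step_seq n) i : (i <= n)%N -> (posx w i + posy w i)%N = i.
Proof.
move=> i_n; rewrite -[RHS](card_ord_lt i_n) -(cardsID [set j | w j]).
by rewrite /posx /posy; congr (_ + _); apply: eq_card => j; rewrite !inE // andbC.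
Qed.

Lemma coprime_has_dvd_primes k j : (0 < j)%N ->
  coprime k j = ~~ has (fun p => p %| k)%N (primes j).
Proof.
move=> j0; case: k => [|k].
  rewrite /coprime gcd0n (eq_has (a2 := predT)) => [|p]; last by rewrite dvdn0.
  by rewrite has_predT lt0n size_eq0 primes_eq0; case: j j0 => [|[|j]].
rewrite coprime_has_primes //; congr (~~ _); apply: eq_in_has => p.
by rewrite !mem_primes => /andP[-> _].
Qed.

Section Walk.
Variables (R : realType) (a : R).

Lemma Xvis_coprime n (w : step_seq n) i : (i <= n)%N ->
  Xvis R w i = (coprime (posx w i) i)%:R.
Proof.
move=> i_n; rewrite /Xvis /visible.
have := posx_add_posy w i_n; set x := posx w i; set y := posy w i => <-.
by rewrite /coprime addnC gcdnDr.
Qed.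

Lemma walk_prob_cons n b (w : step_seq n) :
  walk_prob a (step_cons b w) = (if b then a else 1 - a) * walk_prob a w.
Proof.
rewrite /walk_prob big_ord_recl step_cons0; congr (_ * _).
by apply: eq_bigr => j _; rewrite step_consS.
Qed.

Lemma expect_cons n (F : step_seq n.+1 -> R) :
  expect a F = a * expect a (fun w => F (step_cons true w))
               + (1 - a) * expect a (fun w => F (step_cons false w)).
Proof.
rewrite /expect sum_step_seqS big_bool /= !mulr_sumr.
by congr (_ + _); apply: eq_bigr => w _; rewrite walk_prob_cons mulrA.
Qed.

Lemma sum_walk_prob n : \sum_(w : step_seq n) walk_prob a w = 1.
Proof.
elim: n => [|n IH].
  rewrite (big_pred1 [ffun=> false]) => [|w]; first by rewrite /walk_prob big_ord0.
  by apply/esym/eqP/ffunP => -[].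
rewrite sum_step_seqS big_bool /=.
under eq_bigr do rewrite walk_prob_cons.
under [X in _ + X]eq_bigr do rewrite walk_prob_cons.
by rewrite -!mulr_sumr IH; ring.
Qed.

Lemma expect_cst n (c : R) : expect a (fun _ : step_seq n => c) = c.
Proof. by rewrite /expect -mulr_suml sum_walk_prob mul1r. Qed.

Lemma eq_expect n (f g : step_seq n -> R) : f =1 g -> expect a f = expect a g.
Proof. by move=> fg; apply: eq_bigr => w _; rewrite fg. Qed.

Lemma expect_posx0 n (F : nat -> step_seq n -> R) :
  expect a (fun w => F (posx w 0) w) = expect a (F 0%N).
Proof. by apply: eq_expect => w; rewrite posx0. Qed.

Lemma expect_posx n j (G : nat -> R) : (j <= n)%N ->
  expect a (fun w : step_seq n => G (posx w j)) =
  \sum_(0 <= k < j.+1) bin_weight a j k * G k.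
Proof.
elim: n j G => [|n IH] [|j] G j_n //;
  try by rewrite (expect_posx0 (fun k _ => G k)) expect_cst big_nat1 bin_weight00 mul1r.
rewrite expect_cons sum_bin_weightS.
rewrite (eq_expect (g := fun w => G (1 + posx w j)%N)) => [|w]; last by rewrite /= posx_cons.
rewrite (eq_expect (f := fun w => G (posx (step_cons false w) j.+1))
                   (g := fun w => G (0 + posx w j)%N)) => [|w]; last by rewrite /= posx_cons.
rewrite (IH j (fun k => G (1 + k)%N)) // (IH j G) // !mulr_sumr -big_split.
by apply: eq_bigr => k _; rewrite add1n /=; ring.
Qed.

Lemma expect_posx_pair n i j (F : nat -> nat -> R) : (i <= j)%N -> (j <= n)%N ->
  expect a (fun w : step_seq n => F (posx w i) (posx w j)) =
  \sum_(0 <= k < i.+1) bin_weight a i k *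
    \sum_(0 <= l < (j - i).+1) bin_weight a (j - i) l * F k (k + l)%N.
Proof.
elim: n i j F => [|n IH] [|i] j F ij j_n;
  try by rewrite (expect_posx0 (fun k w => F k (posx w j))) expect_posx //
             big_nat1 bin_weight00 mul1r subn0.
  by move: (leq_trans ij j_n).
case: j ij j_n => // j ij j_n.
rewrite expect_cons subSS sum_bin_weightS.
rewrite (eq_expect (g := fun w => F (1 + posx w i)%N (1 + posx w j)%N)) => [|w].
  rewrite (eq_expect
    (f := fun w => F (posx (step_cons false w) i.+1) (posx (step_cons false w) j.+1))
    (g := fun w => F (0 + posx w i)%N (0 + posx w j)%N)) => [|w].
    rewrite (IH _ _ (fun k l => F k.+1 l.+1)) // (IH _ _ (fun k l => F k l)) //.
    rewrite !mulr_sumr -big_split; apply: eq_bigr => k _.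
    under [in RHS]eq_bigr do rewrite addSn.
    by rewrite /=; ring.
  by rewrite /= !posx_cons.
by rewrite /= !posx_cons.
Qed.

End Walk.

Lemma prod_1_sub_nat (R : comPzRingType) (s : seq nat) (P : pred nat) :
  \prod_(p <- s) (1 - (P p)%:R) = (~~ has P s)%:R :> R.
Proof.
elim: s => [|p s IH]; first by rewrite big_nil.
by rewrite big_cons IH /=; case: (P p); rewrite ?subrr ?mul0r ?subr0 ?mul1r.
Qed.

Lemma coprime_prod_primes (R : comPzRingType) k j : (0 < j)%N ->
  (coprime k j)%:R = \prod_(p <- primes j) (1 - (p %| k)%N%:R) :> R.
Proof. by move=> j0; rewrite prod_1_sub_nat coprime_has_dvd_primes. Qed.

Lemma weighted_cov_le (R : realType) N (w f G : nat -> R) (g e : R) :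
  (forall k, 0 <= w k) -> \sum_(0 <= k < N) w k = 1 ->
  (forall k, 0 <= f k <= 1) ->
  (forall k, (k < N)%N -> `|G k - g| <= e) ->
  `|\sum_(0 <= k < N) w k * f k * G k
    - (\sum_(0 <= k < N) w k * f k) * (\sum_(0 <= k < N) w k * G k)| <= 2 * e.
Proof.
move=> w0 w1 f01 Ge.
set Gm := \sum_(0 <= k < N) w k * G k.
have e2 : 2 * e = \sum_(0 <= k < N) w k * (2 * e) by rewrite -mulr_suml w1 mul1r.
have G_Gm k : (k < N)%N -> `|G k - Gm| <= 2 * e.
  move=> kN.
  have -> : G k - Gm = \sum_(0 <= k' < N) w k' * (G k - G k').
    by rewrite /Gm -[G k in LHS]mul1r -w1 mulr_suml -sumrB; apply: eq_bigr => k' _; ring.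
  apply: le_trans (ler_norm_sum _ _ _) _; rewrite e2.
  apply: ler_sum_nat => k' /andP[_ k'N]; rewrite normrM ger0_norm //.
  apply: ler_wpM2l => //; rewrite (_ : G k - G k' = (G k - g) - (G k' - g)); last by ring.
  by apply: le_trans (ler_normB _ _) _; have := Ge k kN; have := Ge k' k'N; lra.
have -> : \sum_(0 <= k < N) w k * f k * G k - (\sum_(0 <= k < N) w k * f k) * Gm =
          \sum_(0 <= k < N) w k * (f k * (G k - Gm)).
  by rewrite mulr_suml -sumrB; apply: eq_bigr => k _; ring.
apply: le_trans (ler_norm_sum _ _ _) _; rewrite e2.
apply: ler_sum_nat => k /andP[_ kN]; have [f0 f1] := andP (f01 k).
rewrite normrM ger0_norm // ler_wpM2l // normrM ger0_norm //.
by have := G_Gm k kN; have := normr_ge0 (G k - Gm); nra.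
Qed.

Section Covariance.
Variables (R : realType) (a : R).

Definition covariance n (X Y : step_seq n -> R) : R :=
  expect a (fun w => X w * Y w) - expect a X * expect a Y.

Lemma covarianceC n (X Y : step_seq n -> R) : covariance X Y = covariance Y X.
Proof.
by rewrite /covariance mulrC; congr (_ - _); apply: eq_expect => w; rewrite mulrC.
Qed.

Lemma expect_sum n (I : Type) (r : seq I) (X : I -> step_seq n -> R) :
  expect a (fun w => \sum_(i <- r) X i w) = \sum_(i <- r) expect a (X i).
Proof. by rewrite /expect exchange_big; apply: eq_bigr => w _; rewrite mulr_sumr. Qed.

Lemma variance_sum n (I : Type) (r : seq I) (X : I -> step_seq n -> R) :
  variance a (fun w => \sum_(i <- r) X i w) =
  \sum_(i <- r) \sum_(j <- r) covariance (X i) (X j).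
Proof.
rewrite /variance /covariance expect_sum expr2 mulr_suml.
rewrite (eq_expect a (g := fun w => \sum_(i <- r) \sum_(j <- r) X i w * X j w)) => [|w]; last first.
  by rewrite expr2 mulr_suml; apply: eq_bigr => i _; rewrite mulr_sumr.
rewrite expect_sum -sumrB; apply: eq_bigr => i _.
by rewrite expect_sum mulr_sumr -sumrB.
Qed.

Hypothesis a01 : 0 < a < 1.

Lemma walk_prob_ge0 n (w : step_seq n) : 0 <= walk_prob a w.
Proof.
case/andP: a01 => a0 a1; apply: prodr_ge0 => j _.
by case: (w j); rewrite ?subr_ge0 ltW.
Qed.

Lemma covariance_self_le n (X : step_seq n -> R) :
  (forall w, 0 <= X w <= 1) -> covariance X X <= 1.
Proof.
move=> X01; rewrite /covariance.
have : expect a (fun w => X w * X w) <= 1.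
  rewrite -(sum_walk_prob a n); apply: ler_sum => w _.
  rewrite -[X in _ <= X]mulr1 ler_wpM2l ?walk_prob_ge0 //.
  by have [X0 X1] := andP (X01 w); nra.
by have := sqr_ge0 (expect a X); rewrite expr2; lra.
Qed.

Lemma covariance_Xvis_le n i j : (i < j)%N -> (j <= n)%N ->
  `|covariance (fun w : step_seq n => Xvis R w i) (fun w => Xvis R w j)| <=
  2 * (2 ^+ size (primes j) * bin_tv a (j - i)).
Proof.
move=> ij j_n; have ij' := ltnW ij; have i_n := leq_trans ij' j_n.
have j0 : (0 < j)%N by apply: leq_ltn_trans ij.
set h := (j - i)%N.
set f := fun k => ((coprime k i)%:R : R).
set G := fun k => \sum_(0 <= l < h.+1) bin_weight a h l * ((coprime (k + l) j)%:R : R).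
have E_ij : expect a (fun w : step_seq n => Xvis R w i * Xvis R w j) =
            \sum_(0 <= k < i.+1) bin_weight a i k * f k * G k.
  rewrite (eq_expect a (g := fun w => f (posx w i) * (coprime (posx w j) j)%:R)) => [|w].
    rewrite (expect_posx_pair a (fun k m => f k * (coprime m j)%:R)) //.
    apply: eq_bigr => k _; rewrite /G !mulr_sumr; apply: eq_bigr => l _; ring.
  by rewrite !Xvis_coprime.
have E_i : expect a (fun w : step_seq n => Xvis R w i) =
           \sum_(0 <= k < i.+1) bin_weight a i k * f k.
  rewrite (eq_expect a (g := fun w => f (posx w i))) => [|w]; last by rewrite Xvis_coprime.
  exact: expect_posx.
have E_j : expect a (fun w : step_seq n => Xvis R w j) =
           \sum_(0 <= k < i.+1) bin_weight a i k * G k.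
  rewrite (eq_expect a (g := fun w => (coprime (posx w j) j)%:R)) => [|w].
    exact: (expect_posx_pair a (fun _ m => (coprime m j)%:R)).
  by rewrite Xvis_coprime.
rewrite /covariance E_ij E_i E_j.
have a_itv : 0 <= a <= 1 by case/andP: a01 => a0 a1; rewrite !ltW.
apply: (weighted_cov_le (g := \prod_(p <- primes j) (1 - p%:R^-1))) => [k|||k _].
- exact: bin_weight_ge0.
- exact: sum_bin_weight.
- by move=> k; rewrite /f; case: coprime; rewrite ?lexx ?ler01.
have -> : G k = \sum_(0 <= l < h.+1) bin_weight a h l *
    ((1 %| k + l)%N%:R * \prod_(p <- primes j) (1 - (p %| k + l)%N%:R)).
  by apply: eq_bigr => l _; rewrite dvd1n mul1r coprime_prod_primes.
have := @bin_weight_sieve_le R a h (primes j) (primes_uniq j) _ 1%N (ltn0Sn 0) _ k.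
rewrite invr1 mul1r; apply.
  by apply/allP => p; rewrite mem_primes => /andP[].
by apply/allP => p; rewrite mem_primes dvdn1 => /andP[/prime_gt1]; case: eqP => // ->.
Qed.

End Covariance.

Section RealSums.
Variable R : realType.

(* Telescoping: 1 / sqrt (j + 1) <= 2 (sqrt (j + 1) - sqrt j). *)
Lemma sum_inv_sqrt_le j :
  \sum_(0 <= i < j) (Num.sqrt (j - i)%:R)^-1 <= 2 * Num.sqrt (j%:R : R).
Proof.
elim: j => [|j IH]; first by rewrite big_nil sqrtr0 mulr0.
rewrite big_nat_recl // subn0; under eq_bigr do rewrite subSS.
set x := Num.sqrt (j%:R : R); set y := Num.sqrt (j.+1%:R : R).
have x0 : 0 <= x by exact: sqrtr_ge0.
have y0 : 0 < y by rewrite sqrtr_gt0 ltr0n.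
have x2 : x ^+ 2 = j%:R by rewrite sqr_sqrtr // ler0n.
have y2 : y ^+ 2 = j%:R + 1 by rewrite sqr_sqrtr ?ler0n // -natr1.
have : y^-1 <= 2 * y - 2 * x.
  rewrite -[y^-1]mul1r ler_pdivrMr //.
  by have := sqr_ge0 (y - x); nra.
by move: IH; rewrite -/x; lra.
Qed.

Lemma inv_le_ln_diff n : (n.+2%:R : R)^-1 <= ln n.+2%:R - ln n.+1%:R.
Proof.
have p1 : (0 : R) < n.+1%:R by rewrite ltr0n.
have p2 : (0 : R) < n.+2%:R by rewrite ltr0n.
have u1 : (n.+2%:R : R)^-1 < 1 by rewrite invf_lt1 // ltr1n.
have := @le_ln1Dx R (- (n.+2%:R)^-1); rewrite ltrN2 => /(_ u1) le_ln.
rewrite (_ : 1 + - (n.+2%:R : R)^-1 = n.+1%:R / n.+2%:R) in le_ln; last first.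
  by rewrite -[n.+2]addn1 natrD; field; rewrite nat1r natr1 pnatr_eq0.
by rewrite ln_div ?posrE // in le_ln; rewrite -lerN2 opprB.
Qed.

Lemma half_le_ln2 : 1 / 2 <= ln (2 : R).
Proof. by have := inv_le_ln_diff 0; rewrite ln1 subr0 div1r. Qed.

Lemma sum_inv_nat_le n : \sum_(1 <= d < n.+2) (d%:R : R)^-1 <= 1 + ln n.+1%:R.
Proof.
elim: n => [|n IH]; first by rewrite big_nat1 invr1 ln1 addr0.
rewrite big_nat_recr //=; apply: le_trans (lerD IH (inv_le_ln_diff n)) _.
by rewrite -addrA (addrC (ln _)) subrK.
Qed.

End RealSums.

Lemma size_add_divisors p e D :
  size (PrimeDecompAux.add_divisors (p, e) D) = (e.+1 * size D)%N.
Proof.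
rewrite /PrimeDecompAux.add_divisors; elim: e => [|e IH] /=; first by rewrite mul1n.
by rewrite size_merge size_cat size_map IH mulSn addnC.
Qed.

Lemma expn2_size_primes_le x : (0 < x)%N -> (2 ^ size (primes x) <= size (divisors x))%N.
Proof.
move=> x0; rewrite /divisors prime_decompE.
have : all (fun p => 0 < logn p x)%N (primes x) by apply/allP => p; rewrite logn_gt0.
elim: (primes x) => [|p s IH] //= /andP[lp ls].
by rewrite size_add_divisors expnS leq_mul // IH.
Qed.

Lemma size_divisors_le x n : (0 < x)%N -> (x <= n)%N ->
  (size (divisors x) <= \sum_(1 <= d < n.+1) (d %| x))%N.
Proof.
move=> x0 xn.
rewrite (_ : (\sum_(1 <= d < n.+1) _ = count (dvdn^~ x) (index_iota 1 n.+1))%N); last first.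
  by rewrite -sum1_count [RHS]big_mkcond.
rewrite -size_filter uniq_leq_size ?divisors_uniq // => d.
rewrite -dvdn_divisors // mem_filter /index_iota mem_iota => dx; rewrite dx /=.
by have := dvdn_gt0 x0 dx; have := dvdn_leq x0 dx; lia.
Qed.

Lemma sum_expn2_size_primes_le (R : realType) n :
  \sum_(1 <= x < n.+2) (2 ^+ size (primes x) : R) <= n.+1%:R * (1 + ln n.+1%:R).
Proof.
apply: (@le_trans _ _ (\sum_(1 <= d < n.+2) (n.+1 %/ d)%:R)).
  under eq_bigr do rewrite -natrX.
  rewrite -!natr_sum ler_nat; under [X in (_ <= X)%N]eq_bigr do rewrite divn_count_dvd.
  rewrite exchange_big /= big_nat_cond [X in (_ <= X)%N]big_nat_cond.
  apply: leq_sum => x /andP[/andP[x0 xn] _].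
  by apply: leq_trans (expn2_size_primes_le x0) (size_divisors_le x0 _); rewrite -ltnS.
have n0 : (0 : R) <= n.+1%:R by exact: ler0n.
apply: le_trans (ler_wpM2l n0 (sum_inv_nat_le R n)); rewrite mulr_sumr.
apply: ler_sum_nat => d /andP[d0 _]; have dR : (0 : R) < d%:R by rewrite ltr0n.
by rewrite ler_pdivlMr // -natrM ler_nat leq_divM.
Qed.

Lemma sum_lt_inv_sqrt_le (R : realType) n (c : nat -> R) : (forall j, 0 <= c j) ->
  \sum_(1 <= i < n.+1) \sum_(1 <= j < n.+1)
     (if (i < j)%N then c j / Num.sqrt (j - i)%:R else 0)
  <= 2 * Num.sqrt (n%:R : R) * \sum_(1 <= j < n.+1) c j.
Proof.
move=> c0; rewrite exchange_big /= mulr_sumr; apply: ler_sum_nat => j /andP[_ jn].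
set f := fun i => if (i < j)%N then (Num.sqrt (j - i)%:R)^-1 else (0 : R).
have f0 i : 0 <= f i by rewrite /f; case: ifP; rewrite ?invr_ge0 ?sqrtr_ge0.
rewrite (_ : \sum_(1 <= i < n.+1) _ = c j * \sum_(1 <= i < n.+1) f i); last first.
  by rewrite mulr_sumr; apply: eq_bigr => i _; rewrite /f; case: ifP; rewrite ?mulr0.
rewrite mulrC ler_wpM2r //.
apply: (@le_trans _ _ (\sum_(0 <= i < n.+1) f i)).
  by rewrite [X in _ <= X]big_nat_recl //= big_add1 lerDr.
have -> : \sum_(0 <= i < n.+1) f i = \sum_(0 <= i < j) (Num.sqrt (j - i)%:R)^-1.
  rewrite (big_nat_widen _ _ _ _ _ (ltnW jn)) [RHS]big_mkcond /=.
  by apply: eq_bigr => i _; rewrite /f; case: ifP.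
apply: le_trans (sum_inv_sqrt_le R j) _.
by rewrite ler_wpM2l // ler_sqrt ?ler0n // ler_nat -ltnS.
Qed.

Section VarianceBound.
Variables (R : realType) (a : R).
Hypothesis a01 : 0 < a < 1.

Lemma covariance_Xvis_lt_le n i j : (i < j)%N -> (j <= n)%N ->
  covariance a (fun w : step_seq n => Xvis R w i) (fun w => Xvis R w j) <=
  2 * (a * (1 - a))^-1 * 2 ^+ size (primes j) / Num.sqrt (j - i)%:R.
Proof.
move=> ij j_n; apply: le_trans (ler_norm _) _.
apply: le_trans (covariance_Xvis_le a01 ij j_n) _.
rewrite -!mulrA ler_wpM2l // mulrCA ler_wpM2l ?exprn_ge0 //.
by apply: (bin_tv_le a01); rewrite subn_gt0.
Qed.

Lemma variance_Ssum_le n :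
  variance a (@Ssum R n) <=
  n%:R + 4 * Num.sqrt n%:R * \sum_(1 <= j < n.+1) 2 * (a * (1 - a))^-1 * 2 ^+ size (primes j).
Proof.
have K0 : 0 <= (a * (1 - a))^-1.
  by case/andP: a01 => a0 a1; rewrite invr_ge0 mulr_ge0 ?subr_ge0 ?ltW.
set c := fun j => 2 * (a * (1 - a))^-1 * 2 ^+ size (primes j).
have c0 j : 0 <= c j by rewrite /c !mulr_ge0 ?exprn_ge0.
set B := fun i j => if (i < j)%N then c j / Num.sqrt (j - i)%:R else 0.
rewrite /Ssum (variance_sum a (index_iota 1 n.+1) (fun i w => Xvis R w i)).
apply: (@le_trans _ _ (\sum_(1 <= i < n.+1) \sum_(1 <= j < n.+1)
                         ((i == j)%:R + B i j + B j i))).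
  apply: ler_sum_nat => i /andP[_ i_n]; apply: ler_sum_nat => j /andP[_ j_n].
  rewrite /B; case: ltngtP => [ij|ji|<-].
  - by rewrite add0r addr0 covariance_Xvis_lt_le.
  - by rewrite !add0r covarianceC covariance_Xvis_lt_le.
  rewrite /= !addr0; apply: covariance_self_le => // w.
  by rewrite /Xvis; case: visible; rewrite ?lexx ?ler01.
under eq_bigr do rewrite !big_split; rewrite !big_split /= [X in _ + X]exchange_big /=.
have -> : \sum_(1 <= i < n.+1) \sum_(1 <= j < n.+1) ((i == j)%:R : R) = n%:R.
  transitivity (\sum_(1 <= i < n.+1) (1 : R)); last by rewrite sumr_const_nat subn1.
  apply: eq_big_nat => i /andP[i1 i_n].
  rewrite (bigD1_seq i) ?mem_index_iota ?i1 ?iota_uniq //= eqxx big1_seq ?addr0 // => j.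
  by case/andP=> /negPf; rewrite eq_sym => ->.
have := sum_lt_inv_sqrt_le n c0; rewrite -/B; lra.
Qed.

Lemma variance_Ssum_le_ln n : (2 <= n)%N ->
  variance a (@Ssum R n) <=
  (2 + 24 * (a * (1 - a))^-1) * (n%:R * Num.sqrt n%:R) * ln n%:R.
Proof.
case: n => [|m] // m2; have := variance_Ssum_le m.+1; rewrite -mulr_sumr.
have := sum_expn2_size_primes_le R m.
set n := m.+1; set s := Num.sqrt (n%:R : R); set L := ln (n%:R : R).
set S := \sum_(1 <= j < n.+1) _; set K := (a * (1 - a))^-1 => S_le V_le.
have K0 : 0 <= K by case/andP: a01 => a0 a1; rewrite invr_ge0 mulr_ge0 ?subr_ge0 ?ltW.
have s1 : 1 <= s by rewrite -[X in X <= _]sqrtr1 ler_sqrt ?ler0n // ler1n.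
have L_ge : 1 / 2 <= L by apply: le_trans (half_le_ln2 R) _; rewrite ler_ln ?posrE ?ler_nat.
have n0 : (0 : R) <= n%:R by exact: ler0n.
have s0 : 0 <= s := le_trans ler01 s1.
have KS : K * S <= K * (n%:R * (1 + L)) by rewrite ler_wpM2l.
apply: le_trans V_le _.
have -> : 4 * s * (2 * K * S) = 8 * s * (K * S) by ring.
have : n%:R <= n%:R * s by rewrite -[X in X <= _]mulr1 ler_wpM2l.
have : 0 <= K * (n%:R * s) by rewrite !mulr_ge0.
have : 8 * s * (K * S) <= 8 * s * (K * (n%:R * (1 + L))).
  by rewrite ler_wpM2l // !mulr_ge0.
rewrite (_ : 8 * s * (K * (n%:R * (1 + L))) = 8 * (K * (n%:R * s)) * (1 + L)); last by ring.
rewrite (_ : (2 + 24 * K) * (n%:R * s) * L = 2 * (n%:R * s) * L + 24 * (K * (n%:R * s)) * L); last by ring.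
by set X := n%:R * s; nra.
Qed.

End VarianceBound.

Unset Implicit Arguments.

Theorem proposition2 (R : realType) (alpha : R) :
  0 < alpha < 1 ->
  exists C : R, 0 < C /\
    forall n : nat, (2 <= n)%N ->
      variance alpha (@Ssum R n) <=
        C * (n%:R * Num.sqrt (n%:R)) * ln (n%:R).
Proof.
move=> a01; exists (2 + 24 * (alpha * (1 - alpha))^-1); split.
  by case/andP: a01 => a0 a1; rewrite addr_gt0 ?mulr_gt0 // invr_gt0 mulr_gt0 // subr_gt0.
by move=> n; exact: variance_Ssum_le_ln.
Qed.
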